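(* Let $(\mathcal A,\cdot,\ast,D)$ be a special GDN-Poisson admissible algebra and define $x\circ y:=x\ast Dy$ for $x,y\in\mathcal A$. Then $(\mathcal A,\cdot,\circ)$ is a GDN-Poisson algebra.
   Context: A special GDN-Poisson admissible algebra $(\mathcal A,\cdot,\ast,D)$ is a vector space with bilinear products $\cdot,\ast$ and a linear map $D$ such that $(\mathcal A,\cdot)$ is commutative associative with unit $e$, $(\mathcal A,\ast)$ is commutative associative, and $(x\cdot y)\ast z=x\cdot(y\ast z)$, $D(x\ast y)=(Dx)\ast y+x\ast(Dy)$, $D(x\cdot y)=(Dx)\cdot y+x\cdot(Dy)-x\cdot y\cdot(De)$. A GDN-Poisson algebra is a vector space with bilinear products $\cdot,\circ$ such that $(\mathcal A,\cdot)$ is commutative associative with unit $e$, $x\circ(y\circ z)-(x\circ y)\circ z=y\circ(x\circ z)-(y\circ x)\circ z$, $(x\circ y)\circ z=(x\circ z)\circ y$, $(x\cdot y)\circ z=x\cdot(y\circ z)$, and $(x\circ y)\cdot z-x\circ(y\cdot z)=(y\circ x)\cdot z-y\circ(x\cdot z)$. *)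

From mathcomp Require Import all_boot all_algebra.
Set Implicit Arguments. Unset Strict Implicit. Unset Printing Implicit Defensive.
Import GRing.Theory.
Local Open Scope ring_scope.

Definition bilinear_op (K : fieldType) (V : lmodType K) (m : V -> V -> V) : Prop :=
  (forall a x y z, m (a *: x + y) z = a *: m x z + m y z) /\
  (forall a x y z, m x (a *: y + z) = a *: m x y + m x z).

Definition linear_map (K : fieldType) (V : lmodType K) (f : V -> V) : Prop :=
  forall a x y, f (a *: x + y) = a *: f x + f y.

Definition com_assoc (K : fieldType) (V : lmodType K) (m : V -> V -> V) : Prop :=
  (forall x y, m x y = m y x) /\ (forall x y z, m (m x y) z = m x (m y z)).

Definition has_unit (K : fieldType) (V : lmodType K) (m : V -> V -> V) (e : V) : Prop :=
  forall x, m e x = x /\ m x e = x.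

Definition special_GDN_Poisson_admissible (K : fieldType) (V : lmodType K)
  (dot ast : V -> V -> V) (D : V -> V) (e : V) : Prop :=
  bilinear_op dot /\ bilinear_op ast /\ linear_map D /\
      com_assoc dot /\ has_unit dot e /\
      com_assoc ast /\
      (forall x y z, ast (dot x y) z = dot x (ast y z)) /\
      (forall x y, D (ast x y) = ast (D x) y + ast x (D y)) /\
      (forall x y, D (dot x y) = dot (D x) y + dot x (D y) - dot (dot x y) (D e)).

Definition GDN_Poisson (K : fieldType) (V : lmodType K)
  (dot circ : V -> V -> V) (e : V) : Prop :=
  bilinear_op dot /\ bilinear_op circ /\
      com_assoc dot /\ has_unit dot e /\
      (forall x y z, circ x (circ y z) - circ (circ x y) z
                     = circ y (circ x z) - circ (circ y x) z) /\
      (forall x y z, circ (circ x y) z = circ (circ x z) y) /\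
      (forall x y z, circ (dot x y) z = dot x (circ y z)) /\
      (forall x y z, dot (circ x y) z - circ x (dot y z)
                     = dot (circ y x) z - circ y (dot x z)).

From mathcomp Require Import all_boot all_algebra.
Import GRing.Theory.
Local Open Scope ring_scope.

(* Write [*] for [ast], [.] for [dot] and [x o y := x * D y].  The two
   GDN-Poisson identities with content say that a defect is symmetric in [x]
   and [y], and both defects are explicit: the associator
   [x o (y o z) - (x o y) o z] is [x * (y * D (D z))] since [D] is a
   derivation of [*], and [(x o y) . z - x o (y . z)] is
   [x * (y . (z . D e)) - x * (y . D z)] by the twisted Leibniz rule of [D]
   on [.] and the compatibility [(x . y) * z = x . (y * z)]. *)

Section BilinearOp.
Context {K : fieldType} {V : lmodType K} {m : V -> V -> V}.
Hypothesis m_bilinear : bilinear_op m.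

Lemma bilinear_opDr x u v : m x (u + v) = m x u + m x v.
Proof. by have := (proj2 m_bilinear) 1 x u v; rewrite !scale1r. Qed.

Lemma bilinear_opNr x u : m x (- u) = - m x u.
Proof.
have m0 : m x 0 = 0.
  by apply: (addrI (m x 0)); rewrite -bilinear_opDr !addr0.
by have := (proj2 m_bilinear) (-1) x u 0; rewrite addr0 m0 addr0 !scaleN1r.
Qed.

Lemma bilinear_opBr x u v : m x (u - v) = m x u - m x v.
Proof. by rewrite bilinear_opDr bilinear_opNr. Qed.

End BilinearOp.

Section Admissible.
Context {K : fieldType} {V : lmodType K}.
Variables (dot ast : V -> V -> V) (D : V -> V) (e : V).
Hypotheses (ast_bilinear : bilinear_op ast) (D_linear : linear_map D).
Hypotheses (dotC : forall x y, dot x y = dot y x)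
  (dotA : forall x y z, dot (dot x y) z = dot x (dot y z)).
Hypotheses (astC : forall x y, ast x y = ast y x)
  (astA : forall x y z, ast (ast x y) z = ast x (ast y z)).
Hypothesis ast_dotA : forall x y z, ast (dot x y) z = dot x (ast y z).
Hypothesis D_ast : forall x y, D (ast x y) = ast (D x) y + ast x (D y).
Hypothesis D_dot :
  forall x y, D (dot x y) = dot (D x) y + dot x (D y) - dot (dot x y) (D e).

Definition circ x y := ast x (D y).

Lemma astCA x y z : ast x (ast y z) = ast y (ast x z).
Proof. by rewrite -!astA (astC x y). Qed.

Lemma ast_dotCA x y z : ast x (dot y z) = dot y (ast x z).
Proof. by rewrite astC ast_dotA astC. Qed.

Lemma ast_dotC x y z : ast x (dot y z) = ast y (dot x z).
Proof. by rewrite !ast_dotCA -!ast_dotA dotC. Qed.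

Lemma dot_astA x y z : dot (ast x y) z = ast x (dot y z).
Proof. by rewrite dotC -ast_dotA (astC (dot z x)) (dotC z) ast_dotC. Qed.

Lemma circ_associator x y z :
  circ x (circ y z) - circ (circ x y) z = ast x (ast y (D (D z))).
Proof.
rewrite /circ D_ast (bilinear_opDr ast_bilinear) astA.
by rewrite addrC addKr.
Qed.

Lemma circ_dot_defect x y z :
  dot (circ x y) z - circ x (dot y z)
  = ast x (dot y (dot z (D e))) - ast x (dot y (D z)).
Proof.
rewrite /circ D_dot dot_astA !(bilinear_opBr ast_bilinear).
rewrite (bilinear_opDr ast_bilinear) dotA.
by rewrite opprB addrCA opprD addNKr.
Qed.

Lemma circ_left_symmetric x y z :
  circ x (circ y z) - circ (circ x y) z = circ y (circ x z) - circ (circ y x) z.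
Proof. by rewrite !circ_associator astCA. Qed.

Lemma circ_right_commutative x y z : circ (circ x y) z = circ (circ x z) y.
Proof. by rewrite /circ !astA astC (astC (D z)). Qed.

Lemma circ_dot_compatible x y z :
  dot (circ x y) z - circ x (dot y z) = dot (circ y x) z - circ y (dot x z).
Proof. by rewrite !circ_dot_defect (ast_dotC x y) (ast_dotC x y (D z)). Qed.

Lemma circ_bilinear : bilinear_op circ.
Proof.
split=> a x y z; rewrite /circ; first by rewrite (proj1 ast_bilinear).
by rewrite D_linear (proj2 ast_bilinear).
Qed.

End Admissible.

Theorem mainTheorem3 (K : fieldType) (V : lmodType K)
  (dot ast : V -> V -> V) (D : V -> V) (e : V) :
  special_GDN_Poisson_admissible dot ast D e ->
  GDN_Poisson dot (fun x y => ast x (D y)) e.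
Proof.
move=> [dot_bil [ast_bil [D_lin [[dotC dotA] [e_unit
  [[astC astA] [ast_dotA [D_ast D_dot]]]]]]]].
split=> //; split; first exact: circ_bilinear ast_bil D_lin.
do 2!split=> //; split; first exact: circ_left_symmetric ast_bil astC astA D_ast.
split; first exact: circ_right_commutative astC astA.
split; first by move=> x y z; rewrite ast_dotA.
exact: circ_dot_compatible ast_bil dotC dotA astC ast_dotA D_dot.
Qed.
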